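(* In classical propositional logic over a set $X$ of propositional variables, let $X',X''$ be a disjoint cover of $X$, and let $\Sigma\subseteq\Pi X$ be a set of models which is definable by a (possibly infinite) theory, i.e. $\Sigma=M(T)$ for some set $T$ of formulas. Then $\Gamma:=\Sigma\upharpoonright X'\times\Pi X''$ (the set of models $\sigma$ such that some $\tau\in\Sigma$ agrees with $\sigma$ on $X'$) is also definable by a theory.
   Context: Models are identified with sequences: $\Pi X$ is the set of all assignments $X\to\{\mathrm{TRUE},\mathrm{FALSE}\}$; $M(T)$ is the set of models of $T$; $\Sigma\upharpoonright X'$ is the set of restrictions to $X'$ of elements of $\Sigma$. *)

Set Implicit Arguments.

Inductive form (X : Type) : Type :=
| FVar : X -> form X
| FBot : form X
| FNeg : form X -> form X
| FAnd : form X -> form X -> form X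
| FOr  : form X -> form X -> form X
| FImp : form X -> form X -> form X.

Arguments FBot {X}.

Definition model (X : Type) := X -> bool.

Fixpoint sat (X : Type) (m : model X) (phi : form X) : Prop :=
  match phi with
  | FVar x => m x = true
  | FBot => False
  | FNeg p => ~ sat m p
  | FAnd p q => sat m p /\ sat m q
  | FOr p q => sat m p \/ sat m q
  | FImp p q => sat m p -> sat m q
  end.

Definition Mod (X : Type) (T : form X -> Prop) : model X -> Prop :=
  fun m => forall phi, T phi -> sat m phi.

Definition definable (X : Type) (S : model X -> Prop) : Prop :=
  exists T : form X -> Prop, forall m, S m <-> Mod T m.

Definition restr_prod (X : Type) (Sigma : model X -> Prop) (X' : X -> Prop)
  : model X -> Prop :=
  fun s => exists t, Sigma t /\ forall x, X' x -> s x = t x.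

(** Let m satisfy every formula true throughout Gamma. If m were not in Gamma,
    the theory T together with the literals fixing m on X' would have no model,
    so by compactness already T and finitely many of these literals would have
    none. The negated conjunction of those literals then holds in every element
    of Gamma but fails in m. Compactness is proved for an arbitrary set of
    variables through a Lindenbaum extension obtained by Zorn's lemma. *)

From mathcomp Require Import ssreflect ssrfun ssrbool.
From mathcomp Require Import boolp classical_sets.
From Stdlib Require Import List Classical.
Import ListNotations.
Local Open Scope classical_set_scope.

Lemma bigcup_chain_finite {T : Type} {F : set (set T)} (l : list T) :
  total_on F subset ->
  (forall t, In t l -> ~ (\bigcup_(A in F) A) t) \/
  exists2 G, F G & forall t, In t l -> (\bigcup_(A in F) A) t -> G t.
Proof.
move=> Ftot; elim: l => [|a l IH]; first by left.
case: (classic ((\bigcup_(A in F) A) a)) => [[G1 FG1 G1a]|Na]; last first.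
  case: IH => [Nl|[G FG HG]]; [left|right; exists G] => // t [<-|Hin] //.
  - exact: Nl.
  - exact: HG.
right; case: IH => [Nl|[G2 FG2 HG2]].
  by exists G1 => // t [<-|Hin] Ht //; case: (Nl t Hin Ht).
case: (Ftot G1 G2 FG1 FG2) => G12.
- by exists G2 => // t [<-|Hin] Ht; [exact: G12|exact: HG2].
- by exists G1 => // t [<-|Hin] Ht; [|apply: G12; exact: HG2].
Qed.

Section Compactness.
Context {X : Type}.
Implicit Types (D U A : set (form X)) (v : model X) (phi : form X).

Definition satisfiable D := exists v, Mod D v.

Definition fin_sat D := forall l, satisfiable (D `&` [set p | In p l]).

Definition complete D := forall phi, D phi \/ D (FNeg phi).

Lemma fin_sat_add {D} phi :
  fin_sat D -> fin_sat (D `|` [set phi]) \/ fin_sat (D `|` [set FNeg phi]).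
Proof.
move=> HD; apply: NNPP => /not_or_and[/not_all_ex_not[l1 Hl1] /not_all_ex_not[l2 Hl2]].
have [v Hv] := HD (l1 ++ l2).
case: (classic (sat v phi)) => Hphi; [apply: Hl1|apply: Hl2]; exists v;
  move=> p [[Dp | ->] Hin] //; apply: Hv; split => //; apply: in_or_app; by [left|right].
Qed.

Lemma fin_sat_bigcup_chain {U} (F : set (set (form X))) :
  fin_sat U -> (forall A, F A -> fin_sat (U `|` A)) -> total_on F subset ->
  fin_sat (U `|` \bigcup_(A in F) A).
Proof.
move=> HU FU Ftot l; case: (bigcup_chain_finite l Ftot) => [Nl|[G FG HG]].
- have [v Hv] := HU l; exists v => p [[Up|Bp] Hin]; first exact: Hv.
  by case: (Nl p Hin).
- have [v Hv] := FU G FG l; exists v => p [[Up|Bp] Hin]; apply: Hv; split => //.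
  + by left.
  + by right; apply: HG.
Qed.

Lemma lindenbaum U : fin_sat U -> exists2 D, U `<=` D & fin_sat D /\ complete D.
Proof.
move=> HU.
have [A [HA Amax]] :=
  @Zorn_bigcup _ (fun A => fin_sat (U `|` A)) (fun F => fin_sat_bigcup_chain F HU).
have maximal psi : fin_sat ((U `|` A) `|` [set psi]) -> (U `|` A) psi.
  move=> Hpsi; apply: NNPP => Npsi; apply: (Amax (A `|` [set psi])).
  - split; first exact: subsetUl.
    by move=> /(_ psi (or_intror erefl)) Apsi; apply: Npsi; right.
  - by rewrite setUA.
exists (U `|` A); [exact: subsetUl|split => // phi].
by case: (fin_sat_add phi HA) => /maximal; [left|right].
Qed.

Section CompleteTheory.
Variable D : set (form X).
Hypotheses (HD : fin_sat D) (Dcomplete : complete D).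

Lemma complete_agree l : exists v, forall p, In p l -> sat v p <-> D p.
Proof.
(* A member of l outside D has its negation in D, hence is false under v. *)
have [v Hv] := HD (l ++ map (@FNeg X) l).
exists v => p Hin; split => [Hp|Dp].
- case: (Dcomplete p) => // Dnp; exfalso; apply: (Hv (FNeg p)) => //; split => //.
  by apply: in_or_app; right; apply: in_map.
- by apply: Hv; split => //; apply: in_or_app; left.
Qed.

Lemma complete_satisfiable : satisfiable D.
Proof.
pose val x := `[< D (FVar x) >].
suff truth phi : sat val phi <-> D phi by exists val => phi /truth.
have agree3 r p q : exists v,
    [/\ sat v r <-> D r, sat v p <-> D p & sat v q <-> D q].
  have [v Hv] := complete_agree [r; p; q].
  by exists v; split; apply: Hv; [left|right; left|right; right; left].
elim: phi => [x||p IHp|p IHp q IHq|p IHp q IHq|p IHp q IHq] /=.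
- by split => /asboolP.
- by case: (agree3 FBot FBot FBot) => v [] /=; tauto.
- by case: (agree3 (FNeg p) p p) => v [] /=; tauto.
- by case: (agree3 (FAnd p q) p q) => v [] /=; tauto.
- by case: (agree3 (FOr p q) p q) => v [] /=; tauto.
- by case: (agree3 (FImp p q) p q) => v [] /=; tauto.
Qed.

End CompleteTheory.

Theorem compactness U : fin_sat U -> satisfiable U.
Proof.
move=> /lindenbaum[D UD [HD Dcomplete]].
have [v Hv] := @complete_satisfiable D HD Dcomplete.
by exists v => phi /UD /Hv.
Qed.

End Compactness.

Definition theory_of {X : Type} (S : model X -> Prop) : set (form X) :=
  [set phi | forall s, S s -> sat s phi].

Lemma definable_theory_of {X : Type} (S : model X -> Prop) :
  (forall m, Mod (theory_of S) m -> S m) -> definable S.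
Proof. by move=> HS; exists (theory_of S) => m; split => [Sm phi|]; [apply|apply: HS]. Qed.

Section Projection.
Context {X : Type}.
Implicit Type v : model X.

Definition lit (m : model X) (x : X) : form X :=
  if m x then FVar x else FNeg (FVar x).

Lemma sat_lit v m x : sat v (lit m x) <-> v x = m x.
Proof. by rewrite /lit; case: (m x) => /=; case: (v x). Qed.

Definition diagram (m : model X) (Y : set X) : set (form X) := lit m @` Y.

Fixpoint fconj (l : list (form X)) : form X :=
  if l is p :: l' then FAnd p (fconj l') else FNeg FBot.

Lemma sat_fconj v l : sat v (fconj l) <-> forall p, In p l -> sat v p.
Proof.
elim: l => [|a l IH] /=; first by split => // _ [].
split => [[va /IH vl] p [<-|] //|vl]; first exact: vl.
by split; [apply: vl; left|apply/IH => p Hp; apply: vl; right].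
Qed.

Variables (T : set (form X)) (Y : set X).

Lemma restr_prod_Mod m : satisfiable (T `|` diagram m Y) -> restr_prod (Mod T) Y m.
Proof.
move=> [t Ht]; exists t; split => [phi Tphi|x Yx]; first by apply: Ht; left.
by symmetry; apply/sat_lit/Ht; right; exists x.
Qed.

Lemma theory_of_restr_prod_fin_sat m :
  Mod (theory_of (restr_prod (Mod T) Y)) m -> fin_sat (T `|` diagram m Y).
Proof.
move=> Hm l; apply: NNPP => unsat.
pose ld := filter (fun p => `[< diagram m Y p >]) l.
have in_ld p : In p ld <-> In p l /\ diagram m Y p.
  by rewrite filter_In; split => -[? /asboolP].
apply: (Hm (FNeg (fconj ld))); last first.
  by apply/sat_fconj => p /in_ld[_ [x _ <-]]; apply/sat_lit.
move=> s [t [Tt st]] /sat_fconj sc; apply: unsat; exists t => p [[Tp|[x Yx xp]] Hin].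
- exact: Tt.
- rewrite -xp; apply/sat_lit; rewrite -st //; apply/sat_lit/sc/in_ld.
  by split; [rewrite xp|exists x].
Qed.

End Projection.

Theorem corollary3p3 (X : Type) (X' X'' : X -> Prop)
  (Hdisj : forall x, X' x -> X'' x -> False)
  (Hcover : forall x, X' x \/ X'' x)
  (Sigma : model X -> Prop) (T : form X -> Prop)
  (HT : forall m, Sigma m <-> Mod T m) :
  definable (restr_prod Sigma X').
Proof.
(* Restricting to X' already leaves the X''-coordinates free. *)
have -> : Sigma = Mod T by apply/funext => m; apply/propext.
apply: definable_theory_of => m Hm.
by apply/restr_prod_Mod/compactness/theory_of_restr_prod_fin_sat.
Qed.
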